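(* Fix $\delta>0$ and let $\Omega=\{(x,y)\in\mathbb{R}^2 : x>-1\}$. Set $\alpha(x,y)=\frac{y^2+\delta^2}{(1+x)^2}$, $\beta(x,y)=\frac{-2y}{1+x}$, and $\lambda=a+ib$ with $a(x,y)=\frac{y}{1+x}$, $b(x,y)=\frac{\delta}{1+x}$ (so $\alpha=a^2+b^2$, $\beta=-2a$). Let $(u,v)\in C^1(\Omega,\mathbb{R}^2)$ be a solution of the real first-order system $$u_x-\alpha\,v_y=0,\qquad v_x+u_y-\beta\,v_y=0.$$ Define the complex-valued function $w:=u+v\lambda=(u+av)+i\,bv$. Then $w$ satisfies the transport equation $$w_x+\lambda\,w_y=0.$$ Conversely, if $w=p+iq$ satisfies $w_x+\lambda\,w_y=0$, then $u=p-(a/b)\,q$ and $v=q/b$ satisfy the system $u_x-\alpha v_y=0$, $v_x+u_y-\beta v_y=0$.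
   Context: The spectral parameter $\lambda=\frac{y+i\delta}{1+x}$ is the root $\lambda=\frac{-\beta+i\sqrt{4\alpha-\beta^2}}{2}$ associated with the principal symbol of the system; it satisfies the conservative Burgers equation $\lambda_x+\lambda\lambda_y=0$ on $\Omega$ (this is used in the proof). The system is elliptic on all of $\Omega$ since $4\alpha-\beta^2=4\delta^2/(1+x)^2>0$. *)

From Stdlib Require Import Reals.
From Coquelicot Require Export Coquelicot.
Open Scope R_scope.

Definition is_pdx {V : NormedModule R_AbsRing} (f : R -> R -> V) (x y : R) (l : V) : Prop :=
  is_derive (fun t => f t y) x l.
Definition is_pdy {V : NormedModule R_AbsRing} (f : R -> R -> V) (x y : R) (l : V) : Prop :=
  is_derive (fun t => f x t) y l.

Definition Omega (x y : R) : Prop := -1 < x.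

Definition C1_Omega (f : R -> R -> R) : Prop :=
  forall x y, Omega x y ->
    ex_derive (fun t => f t y) x /\ ex_derive (fun t => f x t) y /\
    continuous (fun p : R * R => Derive (fun t => f t (snd p)) (fst p)) (x, y) /\
    continuous (fun p : R * R => Derive (fun t => f (fst p) t) (snd p)) (x, y).

Definition alpha (delta x y : R) : R := (y ^ 2 + delta ^ 2) / (1 + x) ^ 2.
Definition beta (x y : R) : R := - 2 * y / (1 + x).
Definition acoef (x y : R) : R := y / (1 + x).
Definition bcoef (delta x y : R) : R := delta / (1 + x).
Definition lambda (delta x y : R) : C := (acoef x y, bcoef delta x y).

Definition solves_system (delta : R) (u v : R -> R -> R) : Prop :=
  forall x y, Omega x y ->
    exists ux uy vx vy : R,
      is_pdx u x y ux /\ is_pdy u x y uy /\ is_pdx v x y vx /\ is_pdy v x y vy /\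
      ux - alpha delta x y * vy = 0 /\
      vx + uy - beta x y * vy = 0.

Definition solves_transport (delta : R) (w : R -> R -> C) : Prop :=
  forall x y, Omega x y ->
    exists wx wy : C,
      @is_pdx C_R_NormedModule w x y wx /\ @is_pdy C_R_NormedModule w x y wy /\
      Cplus wx (Cmult (lambda delta x y) wy) = RtoC 0.

From Stdlib Require Import Reals Lra.
From Coquelicot Require Import Coquelicot.
Open Scope R_scope.

(* The spectral parameter lambda = (y + i delta)/(1 + x) is the root of
   X^2 + beta X + alpha with positive imaginary part, and it solves the Burgers
   equation lambda_x + lambda lambda_y = 0.  For w = u + v lambda these two
   facts give
     w_x + lambda w_y = (u_x - alpha v_y) + lambda (v_x + u_y - beta v_y),
   so w solves the transport equation iff the real and the lambda-part of the
   right-hand side vanish, i.e. iff (u,v) solves the system, since 1 and lambda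
   are linearly independent over R.  Conversely every w is of the form
   u + v lambda, with v = Im w / b and u = Re w - a v. *)

Lemma is_derive_C (f : R -> C) (x : R) (l : C) :
  @is_derive R_AbsRing C_R_NormedModule f x l <->
  is_derive (fun t => Re (f t)) x (Re l) /\ is_derive (fun t => Im (f t)) x (Im l).
Proof.
  split.
  - intros Hf; unfold is_derive in *; split; eapply filterdiff_ext_lin.
    + apply (filterdiff_comp' f (fun z : C_R_NormedModule => fst z) x _
               (fun z : C_R_NormedModule => fst z) Hf).
      apply filterdiff_linear, (@is_linear_fst R_AbsRing R_NormedModule R_NormedModule).
    + reflexivity.
    + apply (filterdiff_comp' f (fun z : C_R_NormedModule => snd z) x _
               (fun z : C_R_NormedModule => snd z) Hf).
      apply filterdiff_linear, (@is_linear_snd R_AbsRing R_NormedModule R_NormedModule).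
    + reflexivity.
  - intros [Hre Him].
    apply (is_derive_ext (fun t => (Re (f t), Im (f t)) : C_R_NormedModule)).
    { intros t; symmetry; apply surjective_pairing. }
    eapply filterdiff_ext_lin.
    + apply (filterdiff_comp'_2 _ _ (fun a b => (a, b) : C_R_NormedModule) x _ _
               (fun a b => (a, b)) Hre Him).
      apply filterdiff_linear.
      apply (@is_linear_prod R_AbsRing
               (prod_NormedModule R_AbsRing R_NormedModule R_NormedModule)
               R_NormedModule R_NormedModule).
      * apply (@is_linear_fst R_AbsRing R_NormedModule R_NormedModule).
      * apply (@is_linear_snd R_AbsRing R_NormedModule R_NormedModule).
    + intros y; destruct l; reflexivity.
Qed.

Lemma is_derive_C_unique (f : R -> C) (x : R) (l1 l2 : C) :
  is_derive f x l1 -> is_derive f x l2 -> l1 = l2.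
Proof.
  rewrite !is_derive_C; intros [Hre1 Him1] [Hre2 Him2].
  apply injective_projections.
  - change (Re l1 = Re l2).
    now rewrite <- (is_derive_unique _ _ _ Hre1), <- (is_derive_unique _ _ _ Hre2).
  - change (Im l1 = Im l2).
    now rewrite <- (is_derive_unique _ _ _ Him1), <- (is_derive_unique _ _ _ Him2).
Qed.

Lemma is_derive_RtoC (f : R -> R) (x l : R) :
  is_derive f x l -> is_derive (fun t => RtoC (f t)) x (RtoC l).
Proof. intros Hf; apply is_derive_C; split; simpl; [exact Hf | apply (is_derive_const 0)]. Qed.

Lemma is_derive_Cplus (f g : R -> C) (x : R) (df dg : C) :
  is_derive f x df -> is_derive g x dg -> is_derive (fun t => (f t + g t)%C) x (df + dg)%C.
Proof. exact (@is_derive_plus R_AbsRing C_R_NormedModule f g x df dg). Qed.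

Lemma is_derive_Cmult (f g : R -> C) (x : R) (df dg : C) :
  is_derive f x df -> is_derive g x dg ->
  is_derive (fun t => (f t * g t)%C) x (df * g x + f x * dg)%C.
Proof.
  rewrite !is_derive_C; intros [Hfr Hfi] [Hgr Hgi].
  pose proof (fun p q dp dq (Hp : is_derive p x dp) (Hq : is_derive q x dq) =>
                is_derive_mult p q x dp dq Hp Hq Rmult_comm) as Hmult.
  split.
  - replace (Re (df * g x + f x * dg)%C)
      with (Re df * Re (g x) + Re (f x) * Re dg - (Im df * Im (g x) + Im (f x) * Im dg))
      by (destruct df, dg, (f x), (g x); simpl; ring).
    exact (is_derive_minus _ _ _ _ _ (Hmult _ _ _ _ Hfr Hgr) (Hmult _ _ _ _ Hfi Hgi)).
  - replace (Im (df * g x + f x * dg)%C)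
      with (Re df * Im (g x) + Re (f x) * Im dg + (Im df * Re (g x) + Im (f x) * Re dg))
      by (destruct df, dg, (f x), (g x); simpl; ring).
    exact (is_derive_plus _ _ _ _ _ (Hmult _ _ _ _ Hfr Hgi) (Hmult _ _ _ _ Hfi Hgr)).
Qed.

Lemma transport_identity (lam lx ly : C) (al be v ux uy vx vy : R) :
  (lam * lam + be * lam + al)%C = 0 -> (lx + lam * ly)%C = 0 ->
  (ux + (vx * lam + v * lx) + lam * (uy + (vy * lam + v * ly)))%C
  = (RtoC (ux - al * vy) + lam * RtoC (vx + uy - be * vy))%C.
Proof.
  intros Hroot Hburgers.
  transitivity (RtoC (ux - al * vy) + lam * RtoC (vx + uy - be * vy)
                + vy * (lam * lam + be * lam + al) + v * (lx + lam * ly))%C.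
  - rewrite !RtoC_minus, !RtoC_plus, !RtoC_mult; ring.
  - rewrite Hroot, Hburgers; ring.
Qed.

Lemma nonreal_lin_indep (lam : C) (r s : R) :
  Im lam <> 0 -> (RtoC r + lam * RtoC s)%C = 0 -> r = 0 /\ s = 0.
Proof.
  intros Him E.
  assert (Es : Im lam * s = 0).
  { apply (f_equal Im) in E; simpl in E; unfold Im; lra. }
  assert (s = 0) by (destruct (Rmult_integral _ _ Es); [contradiction | assumption]).
  subst s; split; [|reflexivity].
  apply (f_equal Re) in E; simpl in E; lra.
Qed.

Section Transport.

Variable delta : R.

Lemma lambda_char_root (x y : R) : 1 + x <> 0 ->
  (lambda delta x y * lambda delta x y + beta x y * lambda delta x y + alpha delta x y)%C = 0.
Proof.
  intros Hx; unfold lambda, alpha, beta, acoef, bcoef.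
  apply injective_projections; simpl; field; exact Hx.
Qed.

Lemma is_pdx_lambda (x y : R) : 1 + x <> 0 ->
  is_pdx (lambda delta) x y (RtoC (- / (1 + x)) * lambda delta x y)%C.
Proof.
  intros Hx; apply is_derive_C; unfold lambda, acoef, bcoef; split; simpl;
    auto_derive; auto; field; exact Hx.
Qed.

Lemma is_pdy_lambda (x y : R) : 1 + x <> 0 -> is_pdy (lambda delta) x y (RtoC (/ (1 + x))).
Proof.
  intros Hx; apply is_derive_C; unfold lambda, acoef, bcoef; split; simpl;
    auto_derive; auto; field; exact Hx.
Qed.

Lemma lambda_burgers (x y : R) : 1 + x <> 0 ->
  exists lx ly, is_pdx (lambda delta) x y lx /\ is_pdy (lambda delta) x y ly /\
    (lx + lambda delta x y * ly)%C = 0.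
Proof.
  intros Hx; exists (RtoC (- / (1 + x)) * lambda delta x y)%C, (RtoC (/ (1 + x))).
  split; [|split]; [apply is_pdx_lambda, Hx | apply is_pdy_lambda, Hx |].
  rewrite RtoC_opp; ring.
Qed.

Definition w_of_uv (u v : R -> R -> R) (x y : R) : C :=
  (RtoC (u x y) + RtoC (v x y) * lambda delta x y)%C.

Lemma transport_defect (u v : R -> R -> R) (x y ux uy vx vy : R) : Omega x y ->
  is_pdx u x y ux -> is_pdy u x y uy -> is_pdx v x y vx -> is_pdy v x y vy ->
  exists wx wy, is_pdx (w_of_uv u v) x y wx /\ is_pdy (w_of_uv u v) x y wy /\
    (wx + lambda delta x y * wy)%C
    = (RtoC (ux - alpha delta x y * vy)
       + lambda delta x y * RtoC (vx + uy - beta x y * vy))%C.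
Proof.
  intros Hxy Hux Huy Hvx Hvy.
  assert (Hx : 1 + x <> 0) by (unfold Omega in Hxy; lra).
  destruct (lambda_burgers x y Hx) as (lx & ly & Hlx & Hly & Hburgers).
  eexists; eexists; split; [|split].
  - exact (is_derive_Cplus _ _ _ _ _ (is_derive_RtoC _ _ _ Hux)
             (is_derive_Cmult _ _ _ _ _ (is_derive_RtoC _ _ _ Hvx) Hlx)).
  - exact (is_derive_Cplus _ _ _ _ _ (is_derive_RtoC _ _ _ Huy)
             (is_derive_Cmult _ _ _ _ _ (is_derive_RtoC _ _ _ Hvy) Hly)).
  - exact (transport_identity _ _ _ _ _ _ _ _ _ _ (lambda_char_root x y Hx) Hburgers).
Qed.

Lemma transport_of_system (u v : R -> R -> R) :
  solves_system delta u v -> solves_transport delta (w_of_uv u v).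
Proof.
  intros Hs x y Hxy.
  destruct (Hs x y Hxy) as (ux & uy & vx & vy & Hux & Huy & Hvx & Hvy & E1 & E2).
  destruct (transport_defect u v x y ux uy vx vy Hxy Hux Huy Hvx Hvy)
    as (wx & wy & Hwx & Hwy & Hdefect).
  exists wx, wy; split; [|split]; [exact Hwx | exact Hwy |].
  rewrite Hdefect, E1, E2; ring.
Qed.

Hypothesis delta_neq0 : delta <> 0.

Definition u_of_w (w : R -> R -> C) (x y : R) : R :=
  fst (w x y) - acoef x y / bcoef delta x y * snd (w x y).
Definition v_of_w (w : R -> R -> C) (x y : R) : R := snd (w x y) / bcoef delta x y.

Lemma bcoef_neq0 (x y : R) : 1 + x <> 0 -> bcoef delta x y <> 0.
Proof.
  intros Hx; unfold bcoef; apply Rmult_integral_contrapositive_currified;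
    [exact delta_neq0 | apply Rinv_neq_0_compat, Hx].
Qed.

Lemma w_of_uv_of_w (w : R -> R -> C) (x y : R) : Omega x y ->
  w_of_uv (u_of_w w) (v_of_w w) x y = w x y.
Proof.
  intros Hxy; assert (Hx : 1 + x <> 0) by (unfold Omega in Hxy; lra).
  unfold w_of_uv, u_of_w, v_of_w, lambda, acoef, bcoef.
  apply injective_projections; simpl; field; split; assumption.
Qed.

Lemma partials_uv_of_w (w : R -> R -> C) (x y : R) (wx wy : C) : Omega x y ->
  is_pdx w x y wx -> is_pdy w x y wy ->
  exists ux uy vx vy, is_pdx (u_of_w w) x y ux /\ is_pdy (u_of_w w) x y uy /\
    is_pdx (v_of_w w) x y vx /\ is_pdy (v_of_w w) x y vy.
Proof.
  intros Hxy Hwx Hwy; assert (Hx : 1 + x <> 0) by (unfold Omega in Hxy; lra).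
  apply is_derive_C in Hwx as [Hpx Hqx]; apply is_derive_C in Hwy as [Hpy Hqy].
  pose proof (bcoef_neq0 x y Hx) as Hb; unfold bcoef in Hb.
  do 4 eexists; split; [|split; [|split]]; apply Derive_correct; unfold u_of_w, v_of_w.
  - apply (ex_derive_minus (fun t => Re (w t y))
             (fun t => acoef t y / bcoef delta t y * Im (w t y))); [eexists; exact Hpx|].
    apply (ex_derive_mult (fun t => acoef t y / bcoef delta t y) (fun t => Im (w t y)));
      [|eexists; exact Hqx].
    unfold acoef, bcoef; auto_derive; auto.
  - apply (ex_derive_minus (fun t => Re (w x t))
             (fun t => acoef x t / bcoef delta x t * Im (w x t))); [eexists; exact Hpy|].
    apply (ex_derive_mult (fun t => acoef x t / bcoef delta x t) (fun t => Im (w x t)));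
      [|eexists; exact Hqy].
    unfold acoef, bcoef; auto_derive; auto.
  - apply (ex_derive_div (fun t => Im (w t y)) (fun t => bcoef delta t y));
      [eexists; exact Hqx | unfold bcoef; auto_derive; auto | exact Hb].
  - apply (ex_derive_div (fun t => Im (w x t)) (fun t => bcoef delta x t));
      [eexists; exact Hqy | unfold bcoef; auto_derive; auto | exact Hb].
Qed.

Lemma system_of_transport (w : R -> R -> C) :
  solves_transport delta w -> solves_system delta (u_of_w w) (v_of_w w).
Proof.
  intros Ht x y Hxy; assert (Hx : 1 + x <> 0) by (unfold Omega in Hxy; lra).
  destruct (Ht x y Hxy) as (wx & wy & Hwx & Hwy & Hw).
  destruct (partials_uv_of_w w x y wx wy Hxy Hwx Hwy)
    as (ux & uy & vx & vy & Hux & Huy & Hvx & Hvy).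
  exists ux, uy, vx, vy; do 4 (split; [assumption|]).
  destruct (transport_defect _ _ x y ux uy vx vy Hxy Hux Huy Hvx Hvy)
    as (wx' & wy' & Hwx' & Hwy' & Hdefect).
  assert (Ex : wx' = wx).
  { apply (is_derive_C_unique (fun t => w t y) x); [|exact Hwx].
    apply (is_derive_ext_loc _ _ _ _
             (filter_imp _ _ (fun t Ht => w_of_uv_of_w w t y Ht) (open_gt (-1) x Hxy))
             Hwx'). }
  assert (Ey : wy' = wy).
  { apply (is_derive_C_unique (fun t => w x t) y); [|exact Hwy].
    exact (is_derive_ext _ _ _ _ (fun t => w_of_uv_of_w w x t Hxy) Hwy'). }
  subst wx' wy'; rewrite Hw in Hdefect.
  apply (nonreal_lin_indep (lambda delta x y)); [apply bcoef_neq0, Hx | now symmetry].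
Qed.

End Transport.

Theorem proposition3p2 (delta : R) (hdelta : 0 < delta) :
  (forall u v : R -> R -> R,
      C1_Omega u -> C1_Omega v -> solves_system delta u v ->
      solves_transport delta
        (fun x y => Cplus (RtoC (u x y)) (Cmult (RtoC (v x y)) (lambda delta x y))))
  /\
  (forall w : R -> R -> C,
      C1_Omega (fun x y => fst (w x y)) -> C1_Omega (fun x y => snd (w x y)) ->
      solves_transport delta w ->
      solves_system delta
        (fun x y => fst (w x y) - acoef x y / bcoef delta x y * snd (w x y))
        (fun x y => snd (w x y) / bcoef delta x y)).
Proof.
  split.
  - intros u v _ _; apply transport_of_system.
  - intros w _ _; apply system_of_transport; lra.
Qed.
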